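(* Let $\delta=x^{\mathbf d}f(\theta)$ be a homogeneous differential operator of degree $\mathbf d$ with $-\mathbf d$ in the interior of $\sigma^\vee$, and write $\mathbf d=q\mathbf e$ with $q\in\mathbb Z_{\ge1}$ and $\mathbf e\in\mathbb Z^d$ primitive. Then $\delta$ fixes some nonzero monomial ideal of $R$ if and only if (1) $\operatorname{val}(\mathbf a)>-\infty$ for all $\mathbf a\in S$; (2) for all $\mathbf a\in V'_{\mathrm{mon}}(f)$ and $i=0,\dots,q-1$, $\mathbf a-i\mathbf e\in V_{\mathrm{mon}}(f)$; (3) for all $\mathbf a,\mathbf b\in V'_{\mathrm{mon}}(f)$, $\mathbf a-\mathbf b\notin S-\mathbf e$. In this case the only nonzero monomial ideal fixed by $\delta$ is $I=(x^{\mathbf a}\mid\mathbf a\in V'_{\mathrm{mon}}(f)\cap S)$, and $\operatorname{Exp} I=\{\mathbf a\in S:\operatorname{pval}(\mathbf a)\ge 0\}$.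
   Context: Standing notation. Fix $d\ge 1$. Let $\sigma\subseteq\mathbb R^d$ be a full-dimensional, strongly convex rational polyhedral cone, so $\sigma^\vee$ is full-dimensional and strongly convex. $S=\sigma^\vee\cap\mathbb Z^d$, $R=\mathbb C[S]$ with monomial basis $x^{\mathbf a}$, $\mathbf a\in S$. $h_1,\dots,h_n$ are the primitive support functions of the facets of $\sigma^\vee$, so $S=\{\mathbf a\in\mathbb Z^d:h_i(\mathbf a)\ge0\ \forall i\}$. $(g,m)!=\prod_{j=0}^m(g-j)$ for $m\ge0$, $=1$ for $m<0$; $H_{\mathbf d}=\prod_i(h_i,h_i(-\mathbf d)-1)!$. For $f$ divisible by $H_{\mathbf d}$, $\delta=x^{\mathbf d}f(\theta)$ acts by $\delta(x^{\mathbf a})=f(\mathbf a)x^{\mathbf a+\mathbf d}$. $\operatorname{Exp} I=\{\mathbf a\in S:x^{\mathbf a}\in I\}$; $I$ is $\delta$-fixed if $\delta(I)=I$. $V_{\mathrm{mon}}(f)=\{\mathbf a\in\mathbb Z^d:f(\mathbf a)=0\}$; $S-\mathbf e=\{\mathbf s-\mathbf e:\mathbf s\in S\}$. For $\mathbf a\in\mathbb Z^d$, $\operatorname{val}(\mathbf a)=\inf\{t\in\mathbb R:\mathbf a+t\mathbf d\in V_{\mathrm{mon}}(f)\}\in\mathbb R\cup\{\pm\infty\}$ ($\inf\emptyset=+\infty$). When $\operatorname{val}(\mathbf a)$ is finite, $\operatorname{pval}(\mathbf a)=\max\{t\in[\operatorname{val}(\mathbf a),\operatorname{val}(\mathbf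 a)+1):\mathbf a+t\mathbf d\in V_{\mathrm{mon}}(f)\}$ and $\operatorname{vpt}(\mathbf a)=\mathbf a+\operatorname{pval}(\mathbf a)\mathbf d$. $V'_{\mathrm{mon}}(f)=\{\operatorname{vpt}(\mathbf a):\mathbf a\in\mathbb Z^d,\ \operatorname{val}(\mathbf a)\text{ finite}\}$. *)

From Stdlib Require Import Reals.
From Coquelicot Require Import Rbar Lub.
From mathcomp Require Import all_boot all_order all_algebra.
From mathcomp Require Import complex Rstruct mpoly.
Import GRing.Theory Num.Theory.

Set Implicit Arguments.
Unset Strict Implicit.
Unset Printing Implicit Defensive.

Local Open Scope ring_scope.

Notation CC := (complex R).

Section Defs.
Variable d : nat.

Notation vec := 'rV[int]_d.

Definition lf (h a : vec) : int := \sum_(k < d) h 0 k * a 0 k.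

Definition primitive_vec (e : vec) : Prop :=
  forall (k : int) (v : vec), e = k *: v -> k = 1 \/ k = -1.

(* h_1..h_n are the primitive support functions of the facets of sigma^vee,
   where sigma is a full-dimensional strongly convex rational polyhedral cone:
   - each h_i is primitive;
   - sigma^vee = {x | h_i(x) >= 0} is full-dimensional (sigma strongly convex);
   - sigma^vee is strongly convex (sigma full-dimensional);
   - the system is irredundant, so each h_i defines a facet. *)
Definition facet_data (n : nat) (h : 'I_n -> vec) : Prop :=
  [/\ forall i, primitive_vec (h i),
      exists a : vec, forall i, 0 < lf (h i) a,
      forall a : vec, (forall i, lf (h i) a = 0) -> a = 0 &
      forall i, exists a : vec, lf (h i) a < 0 /\
                 forall j, j != i -> 0 <= lf (h j) a].

Section Cone.
Variables (n : nat) (h : 'I_n -> vec).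

(* S = sigma^vee ∩ Z^d *)
Definition inS (a : vec) : Prop := forall i, 0 <= lf (h i) a.

Definition in_interior (a : vec) : Prop := forall i, 0 < lf (h i) a.

Definition hpoly (i : 'I_n) : {mpoly CC[d]} :=
  \sum_(k < d) (h i 0 k)%:~R *: 'X_k.

Definition ffact (g : {mpoly CC[d]}) (m : int) : {mpoly CC[d]} :=
  match m with
  | Posz k => \prod_(j < k.+1) (g - (j%:R : {mpoly CC[d]}))
  | Negz _ => 1
  end.

Definition Hpoly (dd : vec) : {mpoly CC[d]} :=
  \prod_(i < n) ffact (hpoly i) (lf (h i) (- dd) - 1).

Definition mdvd (g f : {mpoly CC[d]}) : Prop := exists r, f = g * r.

Definition evalZ (f : {mpoly CC[d]}) (a : vec) : CC :=
  f.@[fun k => (a 0 k)%:~R].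

Definition Vmon (f : {mpoly CC[d]}) (a : vec) : Prop := evalZ f a = 0.

(* ---- The ring R = C[S], as the C-vector space with basis x^a (a in S):
   an element is a finitely supported coefficient function with support in S. *)
Definition elt := vec -> CC.

Definition inR (p : elt) : Prop :=
  (exists s : seq vec, forall a, p a != 0 -> a \in s) /\
  (forall a, p a != 0 -> inS a).

Definition mono (a : vec) : elt := fun b => if b == a then 1 else 0.

(* the operator delta = x^dd f(theta): delta(x^a) = f(a) x^(a+dd),
   extended linearly *)
Definition delta (f : {mpoly CC[d]}) (dd : vec) (p : elt) : elt :=
  fun b => evalZ f (b - dd) * p (b - dd).

Definition monideal_of (E : vec -> Prop) : elt -> Prop :=
  fun p => inR p /\ forall a, p a != 0 -> E a.

Definition monideal (I : elt -> Prop) : Prop :=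
  exists E : vec -> Prop,
    [/\ forall a, E a -> inS a,
        forall a b, E a -> inS b -> E (a + b) &
        forall p, I p <-> monideal_of E p].

Definition gen_monideal (G : vec -> Prop) : elt -> Prop :=
  monideal_of (fun c => exists a b, [/\ G a, inS a, inS b & c = a + b]).

Definition nonzero_ideal (I : elt -> Prop) : Prop :=
  exists p, I p /\ exists a, p a != 0.

Definition fixes (f : {mpoly CC[d]}) (dd : vec) (I : elt -> Prop) : Prop :=
  forall p, I p <-> exists p', I p' /\ forall b, delta f dd p' b = p b.

Definition Exp (I : elt -> Prop) (a : vec) : Prop := inS a /\ I (mono a).

Definition on_line (a : vec) (t : R) (dd b : vec) : Prop :=
  forall k, (b 0 k)%:~R = (a 0 k)%:~R + t * (dd 0 k)%:~R :> R.

Definition Tset (f : {mpoly CC[d]}) (dd a : vec) (t : R) : Prop :=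
  exists b, on_line a t dd b /\ Vmon f b.

(* val(a) = inf Tset in R ∪ {±oo}, inf of empty = +oo *)
Definition valuation (f : {mpoly CC[d]}) (dd a : vec) : Rbar := Glb_Rbar (Tset f dd a).

Definition is_pval (f : {mpoly CC[d]}) (dd a : vec) (t : R) : Prop :=
  exists v : R, [/\ valuation f dd a = Rbar.Finite v,
    Tset f dd a t, (v <= t) && (t < v + 1) &
    forall t', Tset f dd a t' -> (v <= t') && (t' < v + 1) -> (t' <= t)].

Definition Vmon' (f : {mpoly CC[d]}) (dd b : vec) : Prop :=
  exists (a : vec) (t : R), is_pval f dd a t /\ on_line a t dd b.

End Cone.
End Defs.

From Stdlib Require Import Reals Classical.
From Coquelicot Require Import Rbar Lub.
From mathcomp Require Import all_boot all_order all_algebra.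
From mathcomp Require Import complex Rstruct mpoly.
From mathcomp Require Import zify ring.
Import Order.TTheory GRing.Theory Num.Theory.
Local Open Scope ring_scope.

Set Implicit Arguments.
Unset Strict Implicit.
Unset Printing Implicit Defensive.

(* Since delta(x^a) = f(a) x^(a + dd), a monomial ideal with exponent set E is
   fixed iff E is delta-stable: b in E <-> (b - dd in E and f(b - dd) != 0)
   (stable_fixes, fixed_stable).  Everything else happens on the lines c + Z e:
   their lattice points are the c + j e, at parameter j/q on c + R dd, so val,
   pval and V'_mon(f) are read off from the zeros of j |-> f(c + j e).  The key
   notion is a window at p: at and below p these zeros are exactly the
   p - q < j <= p; then pval(c) = p/q and c + p e lies in V'_mon(f).
   - Necessity (section StableExponents): a delta-stable semigroup ideal E of S
     meets each line in a half line {j <= T}, and stability puts a window at T;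
     (1)-(3) follow, E = {pval >= 0}, and E is generated by V'_mon(f) ∩ S.
   - Sufficiency (section Canonical): H_dd | f gives a zero on every line, (1)
     bounds the zeros below and (2) makes the last zero within q steps of the
     least one a window; with (3), {a in S | pval(a) >= 0} is a nonzero
     delta-stable semigroup ideal. *)

Lemma lfD d (h a b : 'rV[int]_d) : lf h (a + b) = lf h a + lf h b.
Proof. rewrite /lf -big_split /=; apply: eq_bigr => k _; by rewrite !mxE mulrDr. Qed.

Lemma lfZ d (h a : 'rV[int]_d) (k : int) : lf h (k *: a) = k * lf h a.
Proof. rewrite /lf mulr_sumr; apply: eq_bigr => j _; by rewrite !mxE mulrCA. Qed.

Lemma lfN d (h a : 'rV[int]_d) : lf h (- a) = - lf h a.
Proof. rewrite /lf -sumrN; apply: eq_bigr => j _; by rewrite !mxE mulrN. Qed.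

Lemma lfB d (h a b : 'rV[int]_d) : lf h (a - b) = lf h a - lf h b.
Proof. by rewrite lfD lfN. Qed.

(* A primitive vector is nonzero (0 = 2 *: 0 is not primitive). *)
Lemma primitive_nonzero d (e : 'rV[int]_d) : primitive_vec e -> exists k0, e 0 k0 != 0.
Proof.
move=> e_prim; case: (boolP [exists k, e 0 k != 0]) => [/existsP //|].
rewrite negb_exists => /forallP e0.
have e_double0 : e = 2%:Z *: 0.
  apply/matrixP => i k; rewrite (ord1 i) scaler0 mxE.
  by have := e0 k; rewrite negbK => /eqP.
by case: (e_prim _ _ e_double0).
Qed.

(* An integer vector x proportional to a primitive vector e (with ratio D/e_k0)
   is an integer multiple of e: the reduced denominator of the ratio divides
   every coordinate of e, hence is 1. *)
Lemma primitive_multiple d (e : 'rV[int]_d) (k0 : 'I_d) (D : int) (x : 'I_d -> int) :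
  primitive_vec e -> e 0 k0 != 0 ->
  (forall k, x k * e 0 k0 = D * e 0 k) -> exists j : int, forall k, x k = j * e 0 k.
Proof.
move=> e_prim ek0 prop.
pose r : rat := D%:~R / (e 0 k0)%:~R.
have r_ratio k : r * (e 0 k)%:~R = (x k)%:~R.
  rewrite /r mulrAC -intrM -prop intrM mulfK //; by rewrite intr_eq0.
have num_den k : numq r * e 0 k = denq r * x k.
  apply: (@intr_inj rat); rewrite !intrM numqE -r_ratio; by rewrite mulrAC mulrC.
have den_dvd (k : 'I_d) : (denq r %| e ord0 k)%Z.
  have : (denq r %| e ord0 k * numq r)%Z by rewrite mulrC num_den dvdz_mulr.
  rewrite Gauss_dvdzl //; rewrite /coprimez gcdzC; exact: coprime_num_den.
pose v : 'rV[int]_d := \row_k divz (e ord0 k) (denq r).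
have e_den : e = denq r *: v by apply/matrixP => i k; rewrite !mxE (ord1 i) mulrC divzK.
have den1 : denq r = 1.
  case: (e_prim _ _ e_den) => // den_m1; have := denq_gt0 r; by rewrite den_m1.
exists (numq r) => k; by rewrite num_den den1 mul1r.
Qed.

Lemma int_threshold (P : int -> Prop) (j0 : int) (N : nat) :
  P j0 -> ~ P (j0 + N%:Z) -> exists T, P T /\ ~ P (T + 1).
Proof.
elim: N j0 => [|N IH] j0 Pj0 PN; first by rewrite addr0 in PN.
case: (classic (P (j0 + 1))) => P1; last by exists j0.
by apply: (IH _ P1); rewrite (_ : j0 + 1 + N%:Z = j0 + N.+1%:Z) //; lia.
Qed.

Lemma int_least (P : int -> Prop) (K k0 : int) :
  (forall j, j < K -> ~ P j) -> P k0 -> exists m, P m /\ forall j, j < m -> ~ P j.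
Proof.
move=> below_K Pk0.
suff [k [Pk min_k]] : exists k : nat,
    P (K + k%:Z) /\ forall k', (k' < k)%N -> ~ P (K + k'%:Z).
  exists (K + k%:Z); split => // j lt_j; case: (ltrP j K) => [/below_K // | le_Kj].
  by have := min_k `|j - K|%N; rewrite (_ : K + _ = j); [apply; lia | lia].
have [k k0E] : exists k : nat, k0 = K + k%:Z.
  case: (ltrP k0 K) => [/below_K // | le_K]; exists `|k0 - K|%N; lia.
rewrite k0E in Pk0; elim/ltn_ind: k Pk0 {k0E} => k IH Pk.
case: (classic (exists k', (k' < k)%N /\ P (K + k'%:Z))) => [[k' [lt_k' Pk']] | none].
  exact: IH lt_k' Pk'.
exists k; split => // k' lt_k' Pk'; apply: none; by exists k'.
Qed.

Lemma int_last (P : int -> Prop) (m : int) (N : nat) : P m ->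
  exists p, [/\ m <= p <= m + N%:Z, P p & forall j, p < j <= m + N%:Z -> ~ P j].
Proof.
move=> Pm; elim: N => [|N [p [/andP [le_mp le_pN] Pp max_p]]].
  exists m; split => //; first by apply/andP; split; lia.
  by move=> j /andP [? ?]; lia.
case: (classic (P (m + N.+1%:Z))) => PN.
  exists (m + N.+1%:Z); split => //; first by apply/andP; split; lia.
  by move=> j /andP [? ?]; lia.
exists p; split => //; first by apply/andP; split; lia.
move=> j /andP [lt_pj le_jN]; case: (lerP j (m + N%:Z)) => [le_j | lt_j].
  by apply: max_p; apply/andP.
by rewrite (_ : j = m + N.+1%:Z) //; lia.
Qed.

Section Cone.
Variables (d n : nat) (h : 'I_n -> 'rV[int]_d).

Lemma inS_add a b : inS h a -> inS h b -> inS h (a + b).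
Proof. move=> Sa Sb i; rewrite lfD; exact: addr_ge0. Qed.

Lemma inS_scale (k : int) a : 0 <= k -> inS h a -> inS h (k *: a).
Proof. move=> k_ge0 Sa i; rewrite lfZ; exact: mulr_ge0. Qed.

Lemma eval_hpoly i x : evalZ (hpoly h i) x = (lf (h i) x)%:~R.
Proof.
rewrite /evalZ /hpoly /lf raddf_sum rmorph_sum /=; apply: eq_bigr => k _.
by rewrite mevalZ mevalXU intrM.
Qed.

Variables (f : {mpoly CC[d]}) (dd : 'rV[int]_d).
Hypothesis Hdd_dvd : mdvd (Hpoly h dd) f.

(* Divisibility by H_dd makes f vanish wherever 0 <= h_i(x) < h_i(-dd):
   the factor (h_i, h_i(-dd) - 1)! vanishes there. *)
Lemma Hpoly_zero i x : 0 <= lf (h i) x < lf (h i) (- dd) -> evalZ f x = 0.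
Proof.
case/andP=> x_ge0 x_lt; case: Hdd_dvd => r ->.
rewrite /evalZ mevalM /Hpoly rmorph_prod /= (bigD1 i) //= -/(evalZ _ x).
have [m mE] : exists m : nat, lf (h i) (- dd) - 1 = m%:Z.
  by exists `|lf (h i) (- dd) - 1|%N; lia.
have [j jE] : exists j : nat, lf (h i) x = j%:Z by exists `|lf (h i) x|%N; lia.
have lt_jm : (j < m.+1)%N by lia.
rewrite mE /ffact /evalZ rmorph_prod /= (bigD1 (Ordinal lt_jm)) //=.
by rewrite mevalB -/(evalZ _ x) eval_hpoly rmorph_nat jE subrr !mul0r.
Qed.

(* Hence delta maps monomials of R into R: if x is in S and f(x) != 0,
   then x + dd is in S. *)
Lemma step_in_S x : inS h x -> evalZ f x != 0 -> inS h (x + dd).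
Proof.
move=> Sx fx_neq0 i; case: (lerP 0 (lf (h i) (x + dd))) => // lt0.
case/negP: fx_neq0; apply/eqP; apply: (@Hpoly_zero i).
have := Sx i; move: lt0; rewrite lfD -(opprK dd) lfN.
set u := lf (h i) (- dd); set w := lf (h i) x => ? ?; apply/andP; split; lia.
Qed.

End Cone.

Section Direction.
Variables (d n : nat) (h : 'I_n -> 'rV[int]_d) (e : 'rV[int]_d).
Hypothesis e_interior : in_interior h (- e).

Lemma negeS : inS h (- e).
Proof. move=> i; exact: ltW (e_interior i). Qed.

Lemma line_enters_S c : exists K : int, 0 <= K /\ inS h (c - K *: e).
Proof.
exists (\sum_i `|lf (h i) c|); split; first exact: sumr_ge0.
move=> i; rewrite lfB lfZ -mulrN -lfN.
have le_sum : `|lf (h i) c| <= \sum_i `|lf (h i) c|.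
  by rewrite (bigD1 i) //= lerDl sumr_ge0.
have e_pos := e_interior i; have sum_ge0 : 0 <= \sum_i `|lf (h i) c| by exact: sumr_ge0.
set K := \sum_i `|lf (h i) c| in le_sum sum_ge0 *; set x := lf (h i) (- e) in e_pos *.
have le_Kx : K <= K * x by rewrite ler_peMr //; lia.
have := ler_norm (- lf (h i) c); rewrite normrN; lia.
Qed.

Lemma line_leaves_S (i : 'I_n) c : exists K : int, forall k, K <= k -> ~ inS h (c + k *: e).
Proof.
exists (`|lf (h i) c| + 1) => k le_k /(_ i); rewrite lfD lfZ.
have := e_interior i; rewrite lfN; have := ler_norm (lf (h i) c).
set x := lf (h i) e; set y := lf (h i) c => y_le x_neg.
have : 0 <= `|y| by exact: normr_ge0.
have : k <= k * (- x) by rewrite ler_peMr //; lia.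
rewrite mulrN; lia.
Qed.

End Direction.

(* The irredundant facet description of a full-dimensional cone in dimension
   d > 0 has at least one facet (otherwise every a would be 0). *)
Lemma facets_nonempty d n (h : 'I_n -> 'rV[int]_d) : (0 < d)%N -> facet_data h -> (0 < n)%N.
Proof.
move=> d_gt0 [_ _ pointed _]; case: n h pointed => [|m] // h pointed.
have := pointed (const_mx 1) (fun i => match i with Ordinal _ lt_i0 => False_ind _ (notF lt_i0) end).
by move/matrixP => /(_ 0 (Ordinal d_gt0)); rewrite !mxE.
Qed.

(* Its lattice
   points are the c + j e (j in Z), at parameter t = j/q, so val, pval and
   V'_mon(f) are read off from the integer zero set {j | f(c + j e) = 0}. *)
Section Line.
Variables (d : nat) (f : {mpoly CC[d]}) (dd e : 'rV[int]_d) (q : nat).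
Hypotheses (q_gt0 : (0 < q)%N) (e_prim : primitive_vec e) (dd_qe : dd = q%:Z *: e).

Lemma qR_neq0 : (q%:R : R) != 0.
Proof. by rewrite pnatr_eq0 -lt0n. Qed.

Lemma qR_gt0 : (0 : R) < q%:R.
Proof. by rewrite ltr0n. Qed.

Lemma divq_le (x y : int) : (x%:~R / q%:R <= y%:~R / q%:R :> R) = (x <= y).
Proof. by rewrite ler_pM2r ?invr_gt0 ?qR_gt0 // ler_int. Qed.

Lemma divq_lt (x y : int) : (x%:~R / q%:R < y%:~R / q%:R :> R) = (x < y).
Proof. by rewrite ltr_pM2r ?invr_gt0 ?qR_gt0 // ltr_int. Qed.

Lemma divq_inj (x y : int) : x%:~R / q%:R = y%:~R / q%:R :> R -> x = y.
Proof. by move=> xy; apply/eqP; rewrite eq_le -!divq_le xy lexx. Qed.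

Lemma divq_ge0 (x : int) : (0 <= x%:~R / q%:R :> R) = (0 <= x).
Proof. by rewrite pmulr_lge0 ?invr_gt0 ?qR_gt0 // ler0z. Qed.

Lemma divq_add1 (x : int) : x%:~R / q%:R + 1 = (x + q%:Z)%:~R / q%:R :> R.
Proof. by rewrite intrD mulrDl divff // qR_neq0. Qed.

(* The lattice points of the line a + R dd are the a + j e, at t = j/q;
   this is where primitivity of e is used. *)
Lemma on_line_lattice a t b : on_line a t dd b ->
  exists j : int, t = j%:~R / q%:R /\ b = a + j *: e.
Proof.
move=> ab; case: (primitive_nonzero e_prim) => k0 ek0.
have coord k : ((b 0 k - a 0 k)%:~R : R) = t * q%:R * (e 0 k)%:~R.
  by rewrite intrB ab dd_qe mxE intrM addrC addKr mulrA.
have [j jE] : exists j : int, forall k, b 0 k - a 0 k = j * e 0 k.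
  apply: (primitive_multiple (k0 := k0) (D := b 0 k0 - a 0 k0)) => // k.
  apply: (@intr_inj R); by rewrite !intrM !coord mulrAC.
exists j; split.
  have := coord k0; rewrite jE intrM => /mulIf; rewrite intr_eq0 => /(_ ek0) ->.
  by rewrite mulfK // qR_neq0.
by apply/matrixP => i k; rewrite (ord1 i) !mxE -jE addrC subrK.
Qed.

Lemma on_line_step a (j : int) : on_line a (j%:~R / q%:R) dd (a + j *: e).
Proof.
move=> k; rewrite dd_qe !mxE intrD !intrM mulrA.
by rewrite (_ : (q%:Z)%:~R = q%:R :> R) // divfK // qR_neq0.
Qed.

Lemma TsetE a t :
  Tset f dd a t <-> exists j : int, t = j%:~R / q%:R /\ Vmon f (a + j *: e).
Proof.
split.
  case=> b [ab fb]; case: (on_line_lattice ab) => j [-> bE].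
  by exists j; split => //; rewrite -bE.
case=> j [-> fj]; exists (a + j *: e); split => //; exact: on_line_step.
Qed.

Definition zero_at (c : 'rV[int]_d) (j : int) : Prop := Vmon f (c + j *: e).

Lemma zero_at_shift c k j : zero_at (c + k *: e) j <-> zero_at c (k + j).
Proof. by rewrite /zero_at -addrA -scalerDl. Qed.

Lemma valuation_least_zero c m : zero_at c m -> (forall j, j < m -> ~ zero_at c j) ->
  valuation f dd c = Rbar.Finite (m%:~R / q%:R).
Proof.
move=> zm min_m; apply: is_glb_Rbar_unique; split.
  move=> x /TsetE [j [-> zj]] /=; apply/RleP; rewrite divq_le.
  by case: (lerP m j) => // /min_m.
by move=> b lb; apply: lb; apply/TsetE; exists m.
Qed.

Lemma valuation_m_infty c :
  (forall K : int, exists j, j < K /\ zero_at c j) -> valuation f dd c = m_infty.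
Proof.
move=> unbounded; have inT j : zero_at c j -> Tset f dd c (j%:~R / q%:R).
  by move=> zj; apply/TsetE; exists j.
apply: is_glb_Rbar_unique; split; first by move=> x.
case=> [r | |] // lb.
- set K := Num.floor (r * q%:R); case: (unbounded K) => j [lt_jK zj].
  have /RleP r_le := lb _ (inT j zj).
  have rq_le : r * q%:R <= j%:~R.
    by rewrite -(divfK qR_neq0 (j%:~R)) ler_pM2r ?qR_gt0.
  have : (K%:~R : R) < K%:~R.
    apply: (le_lt_trans (floor_le _)); apply: (le_lt_trans rq_le).
    by rewrite ltr_int.
  by rewrite ltxx.
- by case: (unbounded 0) => j [_ zj]; have := lb _ (inT j zj).
Qed.

Lemma pval_last_zero c m p :
  zero_at c m -> (forall j, j < m -> ~ zero_at c j) ->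
  m <= p < m + q%:Z -> zero_at c p -> (forall j, p < j < m + q%:Z -> ~ zero_at c j) ->
  forall t, is_pval f dd c t <-> t = p%:~R / q%:R.
Proof.
move=> zm min_m /andP [le_mp lt_p] zp max_p t; split.
- case=> v [vE Tt /andP [le_vt lt_t] max_t].
  rewrite (valuation_least_zero zm min_m) in vE; case: vE => <- {v} in le_vt lt_t max_t.
  case/TsetE: Tt => j [tE zj]; subst t; congr (_ / _); congr intmul.
  rewrite divq_add1 divq_le divq_lt in le_vt lt_t.
  have le_pj : p <= j.
    rewrite -divq_le; apply: max_t; first by apply/TsetE; exists p.
    by rewrite divq_add1 divq_le divq_lt le_mp lt_p.
  case: (lerP j p) => [le_jp | lt_pj]; first by apply/eqP; rewrite eq_le le_jp le_pj.
  by case: (max_p j) => //; rewrite lt_pj lt_t.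
- move=> ->; exists (m%:~R / q%:R); split.
  + exact: valuation_least_zero zm min_m.
  + by apply/TsetE; exists p.
  + by rewrite divq_add1 divq_le divq_lt le_mp lt_p.
  + move=> t' /TsetE [j [-> zj]]; rewrite divq_add1 divq_le divq_lt => /andP [_ lt_j].
    rewrite divq_le; case: (lerP j p) => // lt_pj.
    by case: (max_p j) => //; rewrite lt_pj lt_j.
Qed.

(* window c p : at and below p, the zeros of f on the line of c are exactly the
   q consecutive points p - q < j <= p.  This is the shape that conditions
   (1)-(2) force on every line, and then pval(c) = p/q. *)
Definition window (c : 'rV[int]_d) (p : int) : Prop :=
  forall j : int, j <= p -> (zero_at c j <-> p - q%:Z < j).

Lemma window_pval c p : window c p -> forall t, is_pval f dd c t <-> t = p%:~R / q%:R.
Proof.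
move=> wp; have q_ge1 : 1 <= q%:Z by rewrite lez_nat.
apply: (@pval_last_zero c (p - q%:Z + 1) p).
- by apply/wp; lia.
- by move=> j lt_j; rewrite wp; lia.
- by apply/andP; split; lia.
- by apply/wp; lia.
- by move=> j /andP [? ?]; lia.
Qed.

Lemma window_valuation c p : window c p -> valuation f dd c <> m_infty.
Proof.
move=> wp; have q_ge1 : 1 <= q%:Z by rewrite lez_nat.
rewrite (@valuation_least_zero c (p - q%:Z + 1)) //; first by apply/wp; lia.
by move=> j lt_j; rewrite wp; lia.
Qed.

Lemma window_shift c p k : window c p -> window (c + k *: e) (p - k).
Proof. by move=> wp j le_j; rewrite zero_at_shift wp; lia. Qed.

Lemma window_uniq c p p' : window c p -> window c p' -> p = p'.
Proof.
wlog le_pp' : p p' / p <= p'.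
  move=> W wp wp'; case: (lerP p p') => [le | lt]; first exact: W.
  by symmetry; apply: W => //; exact: ltW.
move=> wp wp'; have q_ge1 : 1 <= q%:Z by rewrite lez_nat.
case: (lerP p' p) => [le | lt_pp']; first by apply/eqP; rewrite eq_le le le_pp'.
have zp : zero_at c p by apply/wp; lia.
have lt_p'q := proj1 (wp' p le_pp') zp.
have zp'q : zero_at c (p' - q%:Z) by apply/wp; lia.
have := proj1 (wp' (p' - q%:Z) ltac:(lia)) zp'q; lia.
Qed.

Definition all_windows : Prop := forall c, exists p, window c p.

Lemma Vmon'_window (windows : all_windows) a : Vmon' f dd a <-> window a 0.
Proof.
split.
- case=> c [t [pval_t ca]]; case: (windows c) => p wp.
  case: (on_line_lattice ca) => j [tE ->].
  rewrite (proj1 (window_pval wp t) pval_t) in tE; rewrite -(divq_inj tE).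
  by have := window_shift (k := p) wp; rewrite subrr.
- move=> wa; exists a, 0; split; first by apply/(window_pval wa); rewrite mul0r.
  by move=> k; rewrite mul0r addr0.
Qed.

End Line.

Section MonomialIdeals.
Variables (d n : nat) (h : 'I_n -> 'rV[int]_d) (f : {mpoly CC[d]}) (dd : 'rV[int]_d).

Definition delta_stable (E : 'rV[int]_d -> Prop) : Prop :=
  forall b, E b <-> E (b - dd) /\ evalZ f (b - dd) != 0.

Lemma monideal_of_mono (E : 'rV[int]_d -> Prop) (E_S : forall a, E a -> inS h a) b :
  monideal_of h E (mono b) <-> E b.
Proof.
split; first by case=> _ /(_ b); rewrite /mono eqxx; apply; exact: oner_neq0.
move=> Eb; split; [split|].
- exists [:: b] => a; rewrite /mono inE; case: (a =P b) => // _; by rewrite eqxx.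
- move=> a; rewrite /mono; case: (a =P b) => [-> | ] _; [exact: E_S | by rewrite eqxx].
- move=> a; rewrite /mono; case: (a =P b) => [-> | ] //; by rewrite eqxx.
Qed.

Lemma monideal_of_ext (E E' : 'rV[int]_d -> Prop) : (forall c, E c <-> E' c) ->
  forall p, monideal_of h E p <-> monideal_of h E' p.
Proof. by move=> EE' p; split; case=> Rp Ep; split => // a /Ep; rewrite EE'. Qed.

(* A delta-stable exponent set gives a delta-fixed ideal: the preimage of p is
   p' = p(. + dd) / f, supported where f does not vanish. *)
Lemma stable_fixes (E : 'rV[int]_d -> Prop) (E_S : forall a, E a -> inS h a) :
  delta_stable E -> fixes f dd (monideal_of h E).
Proof.
move=> E_stable p; split.
- case=> [[[s supp_s] _] Ep].
  pose p' y := if evalZ f y != 0 then p (y + dd) / evalZ f y else 0.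
  have E_p' y : p' y != 0 -> evalZ f y != 0 /\ E y.
    rewrite /p'; case: ifP => [fy p'y | _]; last by rewrite eqxx.
    have : E (y + dd) by apply: Ep; move: p'y; apply: contra => /eqP ->; rewrite mul0r.
    by case/E_stable => + _; rewrite addrK.
  exists p'; split; first split; first split.
  + exists (map (fun x => x - dd) s) => y p'y; apply/mapP; exists (y + dd); last by rewrite addrK.
    apply: supp_s; move: p'y; rewrite /p'; case: ifP => _; last by rewrite eqxx.
    by apply: contra => /eqP ->; rewrite mul0r.
  + by move=> y /E_p' [_ /E_S].
  + by move=> y /E_p' [].
  + move=> b; rewrite /delta /p' subrK; case: ifP => fb.
    * by rewrite mulrCA mulfV // mulr1.
    * rewrite mulr0; case: (eqVneq (p b) 0) => [-> // | pb].
      by case: (E_stable b) => /(_ (Ep _ pb)) [_]; rewrite fb.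
- case=> p' [[[[s supp_s] _] Ep'] deltap'].
  have E_p b : p b != 0 -> E (b - dd) /\ evalZ f (b - dd) != 0.
    rewrite -deltap' /delta mulf_eq0 negb_or => /andP [fb p'b]; split => //; exact: Ep'.
  split; first split.
  + exists (map (fun x => x + dd) s) => b pb; apply/mapP; exists (b - dd); last by rewrite subrK.
    apply: supp_s; move: pb; rewrite -deltap' /delta mulf_eq0 negb_or => /andP [_ //].
  + by move=> b /E_p /E_stable /E_S.
  + by move=> b /E_p /E_stable.
Qed.

(* Conversely, the exponent set of a delta-fixed monomial ideal is delta-stable:
   x^b is in I iff it is delta of an element of I, i.e. of x^(b-dd)/f(b-dd). *)
Lemma fixed_stable (I : elt d -> Prop) : monideal h I -> fixes f dd I ->
  exists E : 'rV[int]_d -> Prop,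
  [/\ forall a, E a -> inS h a, forall a b, E a -> inS h b -> E (a + b),
      delta_stable E & forall p, I p <-> monideal_of h E p].
Proof.
case=> E [E_S E_ideal IE] I_fixed; exists E; split => // b.
have I_mono c : I (mono c) <-> E c by rewrite IE; exact: monideal_of_mono.
split.
- move/I_mono/I_fixed => [p' [Ip' deltap']]; have := deltap' b.
  rewrite /delta /mono eqxx => deltab.
  have : evalZ f (b - dd) * p' (b - dd) != 0 by rewrite deltab oner_neq0.
  rewrite mulf_eq0 negb_or => /andP [fb p'b]; split => //.
  by case: (proj1 (IE p') Ip') => _; apply.
- case=> Eb fb; apply/I_mono/I_fixed.
  pose p' y := if y == b - dd then (evalZ f (b - dd))^-1 else 0.
  exists p'; split.
  + apply/IE; split; first split.
    * exists [:: b - dd] => y; rewrite /p' inE; case: (y =P b - dd) => // _; by rewrite eqxx.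
    * move=> y; rewrite /p'; case: (y =P b - dd) => [-> | ] _; [exact: E_S | by rewrite eqxx].
    * move=> y; rewrite /p'; case: (y =P b - dd) => [-> | ] //; by rewrite eqxx.
  + move=> y; rewrite /delta /p' /mono; case: (eqVneq y b) => [-> | neq_yb].
    * by rewrite eqxx mulfV.
    * by case: eqP => [/addIr yb | _]; [rewrite yb eqxx in neq_yb | rewrite mulr0].
Qed.

End MonomialIdeals.

Section Main.
Variables (d n : nat) (h : 'I_n -> 'rV[int]_d) (f : {mpoly CC[d]}) (dd e : 'rV[int]_d).
Variables (q : nat) (i0 : 'I_n).
Hypotheses (Hdd_dvd : mdvd (Hpoly h dd) f) (dd_interior : in_interior h (- dd)).
Hypotheses (q_gt0 : (0 < q)%N) (e_prim : primitive_vec e) (dd_qe : dd = q%:Z *: e).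

Local Notation zero_at := (zero_at f e).
Local Notation window := (window f e q).
Local Notation all_windows := (all_windows f e q).
Local Notation Vmon'_top := (Vmon'_window q_gt0 e_prim dd_qe).

Definition val_finite : Prop := forall a, inS h a -> valuation f dd a <> m_infty.

Definition V'_steps : Prop :=
  forall a, Vmon' f dd a -> forall i : nat, (i < q)%N -> Vmon f (a - i%:Z *: e).

Definition V'_separated : Prop :=
  forall a b, Vmon' f dd a -> Vmon' f dd b -> ~ (exists s, inS h s /\ a - b = s - e).

Definition Ecanon (c : 'rV[int]_d) : Prop :=
  inS h c /\ exists t, is_pval f dd c t /\ 0 <= t.

Lemma e_interior : in_interior h (- e).
Proof. by move=> i; have := dd_interior i; rewrite dd_qe -scalerN lfZ pmulr_rgt0 // ltz_nat. Qed.

Lemma Ecanon_window c p : window c p -> (Ecanon c <-> inS h c /\ 0 <= p).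
Proof.
move=> wp; have pvalE := window_pval q_gt0 e_prim dd_qe wp.
split; first by case=> Sc [t [/pvalE -> t_ge0]]; rewrite divq_ge0 in t_ge0.
case=> Sc p_ge0; split => //; exists (p%:~R / q%:R); split; first exact/pvalE.
by rewrite divq_ge0.
Qed.

(* Every line c + Z e meets V_mon(f): H_dd kills the points with
   0 <= h_i0(x) < h_i0(-dd), and the line crosses this slab. *)
Lemma line_has_zero c : exists k : int, zero_at c k.
Proof.
set s := lf (h i0) (- e); have s_gt0 : 0 < s := e_interior i0.
exists (lf (h i0) c %/ s)%Z; apply: (@Hpoly_zero _ _ h f dd Hdd_dvd i0).
rewrite lfD lfZ dd_qe -scalerN lfZ -/s -(opprK e) lfN -/s.
have := divz_eq (lf (h i0) c) s; have := modz_ge0 (lf (h i0) c) (lt0r_neq0 s_gt0).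
have := ltz_pmod (lf (h i0) c) s_gt0.
set k := (lf (h i0) c %/ s)%Z; set r := (lf (h i0) c %% s)%Z; set y := lf (h i0) c.
have : s <= q%:Z * s by rewrite ler_peMl //; lia.
move=> ? ? ? ?; apply/andP; split; nia.
Qed.

(* Sufficiency, step 1: conditions (1) and (2) put a window on every line.
   By (1) the zeros on a line are bounded below: otherwise val = -oo at the
   point where the line enters S. *)
Lemma zeros_bounded_below (c1 : val_finite) c :
  exists K, forall j, j < K -> ~ zero_at c j.
Proof.
apply: NNPP => unbounded; case: (line_enters_S e_interior c) => K0 [_ S_K0].
apply: (c1 _ S_K0); apply: (valuation_m_infty q_gt0 e_prim dd_qe) => K.
case: (classic (exists j, j < K - K0 /\ zero_at c j)) => [[j [lt_j zj]] | none].
  exists (j + K0); split; first lia.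
  by rewrite -scaleNr zero_at_shift (_ : - K0 + (j + K0) = j) //; lia.
case: unbounded; exists (K - K0) => j lt_j zj; apply: none; by exists j.
Qed.

(* The window on the line of c sits at the last zero p within q steps of the
   least zero m: below p, (2) applied at vpt(c) = c + p e supplies the zeros
   p - q < j <= p, and there are no zeros below m. *)
Lemma windows_of_conditions (c1 : val_finite) (c2 : V'_steps) : all_windows.
Proof.
move=> c; have [K below_K] := zeros_bounded_below c1 c.
have [k0 zk0] := line_has_zero c.
have [m [zm min_m]] := int_least below_K zk0.
have [p [/andP [le_mp le_p] zp max_p]] := int_last q.-1 zm.
have pval_p : is_pval f dd c (p%:~R / q%:R).
  have lt_p : m <= p < m + q%:Z by apply/andP; split; lia.
  have max_p' j : p < j < m + q%:Z -> ~ zero_at c j.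
    by move=> /andP [lt_pj lt_j]; apply: max_p; apply/andP; split; lia.
  exact/(pval_last_zero q_gt0 e_prim dd_qe zm min_m lt_p zp max_p').
have V'_p : Vmon' f dd (c + p *: e).
  by exists c, (p%:~R / q%:R); split => //; exact: on_line_step.
exists p => j le_jp; split.
- move=> zj; case: (lerP m j) => [le_mj | /min_m //]; lia.
- move=> lt_j; have := c2 _ V'_p `|p - j|%N ltac:(lia).
  rewrite (_ : c + p *: e - `|p - j|%N%:Z *: e = c + j *: e) //.
  by rewrite (_ : `|p - j|%N%:Z = p - j); [apply/matrixP => a b; rewrite !mxE; ring | lia].
Qed.

(* E is a semigroup ideal of S and -e is in S, so E meets
   each line in a half line {j <= T}; stability then forces a window at T. *)
Section StableExponents.
Variable E : 'rV[int]_d -> Prop.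
Hypotheses (E_S : forall a, E a -> inS h a) (E_ideal : forall a b, E a -> inS h b -> E (a + b)).
Hypotheses (E_stable : delta_stable f dd E) (E_nonempty : exists a0, E a0).

(* E is closed under moving down a line, since -e is in S. *)
Lemma E_down c j k : E (c + j *: e) -> k <= j -> E (c + k *: e).
Proof.
move=> Ej le_kj; have -> : c + k *: e = (c + j *: e) + (j - k) *: (- e).
  by apply/matrixP => i l; rewrite !mxE; ring.
apply: E_ideal => //; apply: inS_scale; [lia | exact: negeS e_interior].
Qed.

(* Each line enters E (it enters a0 + S) and leaves it (it leaves S). *)
Lemma E_halfline c : exists T, forall j, E (c + j *: e) <-> j <= T.
Proof.
case: E_nonempty => a0 Ea0.
have [j0 Ej0] : exists j0, E (c + j0 *: e).
  case: (line_enters_S e_interior (c - a0)) => K [_ S_K]; exists (- K).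
  have -> : c + - K *: e = a0 + (c - a0 - K *: e) by apply/matrixP => i l; rewrite !mxE; ring.
  exact: E_ideal.
case: (line_leaves_S e_interior i0 c) => K leaves.
have [T [ET not_ET1]] : exists T, E (c + T *: e) /\ ~ E (c + (T + 1) *: e).
  apply: (@int_threshold (fun j => E (c + j *: e)) j0 `|K - j0|%N) => // /E_S.
  by apply: leaves; lia.
exists T => j; split => [Ej | le_jT]; last exact: E_down ET le_jT.
by case: (lerP j T) => // lt_Tj; case: not_ET1; apply: E_down Ej _; lia.
Qed.

(* With E = {j <= T} on the line, stability at c + (j + q) e reads:
   j + q <= T iff (j <= T and f(c + j e) != 0). *)
Lemma halfline_window c T : (forall j, E (c + j *: e) <-> j <= T) -> window c T.
Proof.
move=> ET j le_jT; have q_ge1 : 1 <= q%:Z by rewrite lez_nat.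
have stab := E_stable (c + (j + q%:Z) *: e).
rewrite (_ : c + (j + q%:Z) *: e - dd = c + j *: e) in stab; last first.
  by rewrite dd_qe scalerDl addrA addrK.
rewrite !ET in stab; rewrite /zero_at /Vmon -/(evalZ f (c + j *: e)); split.
- move=> f0; case: (lerP (j + q%:Z) T) => [le | lt]; last by lia.
  by case: (proj1 stab le) => _; rewrite f0 eqxx.
- move=> lt_j; apply/eqP; apply/negPn/negP => f_neq0.
  have := proj2 stab (conj le_jT f_neq0); lia.
Qed.

Lemma stable_windows : all_windows.
Proof.
move=> c; have [T ET] := E_halfline c; exists T; exact: halfline_window.
Qed.

Lemma E_window_top a : window a 0 -> E a /\ ~ E (a + e).
Proof.
move=> wa; have [T ET] := E_halfline a.
have T0 := window_uniq q_gt0 (halfline_window ET) wa; subst T.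
split; first by have := proj2 (ET 0) (lexx _); rewrite scale0r addr0.
by move=> Ea1; have := proj1 (ET 1); rewrite scale1r => /(_ Ea1).
Qed.

(* Condition (3): if a - b = s - e then a + e = b + s would lie in E. *)
Lemma stable_separated : V'_separated.
Proof.
move=> a b /(Vmon'_top stable_windows) wa /(Vmon'_top stable_windows) wb [s [Ss abE]].
case: (E_window_top wa) => _; apply.
have -> : a + e = b + s by rewrite -(subrK b a) abE addrAC subrK addrC.
by apply: E_ideal => //; exact: (E_window_top wb).1.
Qed.

Lemma stable_canon c : E c <-> Ecanon c.
Proof.
have [T ET] := E_halfline c.
rewrite (Ecanon_window (halfline_window ET)) -ET scale0r addr0.
by split => [Ec | [] //]; split => //; exact: E_S.
Qed.

(* ... and it is generated by V'_mon(f) ∩ S: c = (c + T e) + T (-e). *)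
Lemma stable_generated c :
  E c <-> exists a b, [/\ Vmon' f dd a /\ inS h a, inS h a, inS h b & c = a + b].
Proof.
split.
- move=> Ec; have [T ET] := E_halfline c.
  have T_ge0 : 0 <= T by apply/ET; rewrite scale0r addr0.
  have wtop : window (c + T *: e) 0.
    by have := window_shift q_gt0 (k := T) (halfline_window ET); rewrite subrr.
  have Etop := (E_window_top wtop).1.
  exists (c + T *: e), (T *: (- e)); split => //.
  + by split; [exact/(Vmon'_top stable_windows) | exact: E_S].
  + exact: E_S.
  + by apply: inS_scale => //; exact: negeS e_interior.
  + by rewrite scalerN addrK.
- case=> a [b [[V'a _] _ Sb ->]]; apply: E_ideal => //.
  exact: (E_window_top (proj1 (Vmon'_top stable_windows a) V'a)).1.
Qed.

End StableExponents.

Section Canonical.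
Hypotheses (windows : all_windows) (c3 : V'_separated).

(* If a is in Ecanon, s in S but a + s not, the tops a + pa e and
   a + s + r e of the two windows would differ by an element of S - e. *)
Lemma canon_ideal a s : Ecanon a -> inS h s -> Ecanon (a + s).
Proof.
move=> Ea Ss; have [pa wa] := windows a; have [r wr] := windows (a + s).
case/(Ecanon_window wa): Ea => Sa pa_ge0.
apply/(Ecanon_window wr); split; first exact: inS_add.
case: (lerP 0 r) => // r_lt0; exfalso.
have topA : window (a + pa *: e) 0 by have := window_shift q_gt0 (k := pa) wa; rewrite subrr.
have topB : window (a + s + r *: e) 0 by have := window_shift q_gt0 (k := r) wr; rewrite subrr.
apply: (c3 (proj2 (Vmon'_top windows _) topB) (proj2 (Vmon'_top windows _) topA)).
exists (s + (pa - r - 1) *: (- e)); split.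
- by apply: inS_add => //; apply: inS_scale; [lia | exact: negeS e_interior].
- by apply/matrixP => i l; rewrite !mxE; ring.
Qed.

(* Moving down by dd shifts the window up by q; a zero at b - dd is exactly a
   zero of the window of b at -q. *)
Lemma canon_stable : delta_stable f dd Ecanon.
Proof.
move=> b; have [p wp] := windows b; have q_ge1 : 1 <= q%:Z by rewrite lez_nat.
have b_dd : b - dd = b + (- q%:Z) *: e by rewrite dd_qe scaleNr.
have wp' : window (b - dd) (p + q%:Z).
  by rewrite b_dd; have := window_shift q_gt0 (k := - q%:Z) wp; rewrite opprK.
have zero_dd : zero_at b (- q%:Z) <-> evalZ f (b - dd) = 0 by rewrite /zero_at /Vmon b_dd.
have S_ndd : inS h (- dd) by move=> i; exact: ltW (dd_interior i).
rewrite (Ecanon_window wp) (Ecanon_window wp'); split.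
- case=> Sb p_ge0; split; first by split; [exact: inS_add | lia].
  by apply/eqP => /zero_dd /(wp (- q%:Z) ltac:(lia)); lia.
- case=> [[Sbdd pq_ge0] fb]; split; first by have := step_in_S Hdd_dvd Sbdd fb; rewrite subrK.
  case: (lerP 0 p) => // p_lt0; case/negP: fb; apply/eqP/zero_dd.
  by apply/(wp (- q%:Z) ltac:(lia)); lia.
Qed.

(* Far enough down a line inside S, pval becomes nonnegative. *)
Lemma canon_nonempty : exists a0, Ecanon a0.
Proof.
have [K [_ S_K]] := line_enters_S e_interior 0; have [p wp] := windows (0 - K *: e).
exists ((0 - K *: e) + (- `|p|%:Z) *: e).
have wp' := window_shift q_gt0 (k := - `|p|%:Z) wp; rewrite opprK in wp'.
apply/(Ecanon_window wp'); split; last by lia.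
by apply: inS_add => //; rewrite scaleNr -scalerN; apply: inS_scale => //; exact: negeS e_interior.
Qed.

End Canonical.

Lemma fixed_ideal_exponents I : monideal h I -> nonzero_ideal I -> fixes f dd I ->
  exists E : 'rV[int]_d -> Prop,
  [/\ [/\ forall a, E a -> inS h a, forall a b, E a -> inS h b -> E (a + b),
         delta_stable f dd E & exists a0, E a0]
    & forall p, I p <-> monideal_of h E p].
Proof.
move=> I_mon [p [Ip [a pa]]] I_fixed.
have [E [E_S E_ideal E_stable IE]] := fixed_stable I_mon I_fixed.
exists E; split => //; split => //; exists a.
by case: (proj1 (IE p) Ip) => _; apply.
Qed.

Lemma fixed_ideal_conditions :
  (exists I, [/\ monideal h I, nonzero_ideal I & fixes f dd I]) ->
  [/\ val_finite, V'_steps & V'_separated].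
Proof.
case=> I [I_mon I_nz I_fixed].
have [E [[E_S E_ideal E_stable E_nonempty] _]] := fixed_ideal_exponents I_mon I_nz I_fixed.
have windows := stable_windows E_S E_ideal E_stable E_nonempty.
split.
- by move=> a _; have [p wp] := windows a; exact: window_valuation wp.
- move=> a /(Vmon'_top windows) wa i lt_iq.
  by have := proj2 (wa (- i%:Z) ltac:(lia)) ltac:(lia); rewrite /zero_at scaleNr.
- exact: stable_separated E_S E_ideal E_stable E_nonempty.
Qed.

Lemma conditions_fixed_ideal :
  [/\ val_finite, V'_steps & V'_separated] ->
  exists I, [/\ monideal h I, nonzero_ideal I & fixes f dd I].
Proof.
case=> c1 c2 c3; have windows := windows_of_conditions c1 c2.
have canon_S a : Ecanon a -> inS h a by case.
have [a0 Ea0] := canon_nonempty windows.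
exists (monideal_of h Ecanon); split.
- by exists Ecanon; split => //; exact: canon_ideal.
- exists (mono a0); split; first exact/(monideal_of_mono canon_S).
  by exists a0; rewrite /mono eqxx oner_neq0.
- exact: stable_fixes canon_S (canon_stable windows).
Qed.

Lemma fixed_ideal_description I : monideal h I -> nonzero_ideal I -> fixes f dd I ->
  (forall p, I p <-> gen_monideal h (fun a => Vmon' f dd a /\ inS h a) p) /\
  (forall a, Exp h I a <-> Ecanon a).
Proof.
move=> I_mon I_nz I_fixed.
have [E [[E_S E_ideal E_stable E_nonempty] IE]] := fixed_ideal_exponents I_mon I_nz I_fixed.
split=> [p | a].
- rewrite IE; apply: monideal_of_ext => c.
  exact: stable_generated E_S E_ideal E_stable E_nonempty c.
- rewrite /Exp IE (monideal_of_mono E_S) (stable_canon E_S E_ideal E_stable E_nonempty).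
  by split => [[] // | Ea]; split => //; case: Ea.
Qed.

End Main.

Theorem mainTheorem10
  (d n : nat) (h : 'I_n -> 'rV[int]_d)
  (f : {mpoly CC[d]}) (dd e : 'rV[int]_d) (q : nat) :
  (0 < d)%N ->
  facet_data h ->
  mdvd (Hpoly h dd) f ->
  in_interior h (- dd) ->
  (0 < q)%N -> primitive_vec e -> dd = q%:Z *: e ->
  let cond1 := forall a, inS h a -> valuation f dd a <> m_infty in
  let cond2 := forall a, Vmon' f dd a ->
                 forall i : nat, (i < q)%N -> Vmon f (a - i%:Z *: e) in
  let cond3 := forall a b, Vmon' f dd a -> Vmon' f dd b ->
                 ~ (exists s, inS h s /\ a - b = s - e) in
  ((exists I, [/\ monideal h I, nonzero_ideal I & fixes f dd I])
     <-> [/\ cond1, cond2 & cond3]) /\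
  ([/\ cond1, cond2 & cond3] ->
   forall I, monideal h I -> nonzero_ideal I -> fixes f dd I ->
     (forall p, I p <-> gen_monideal h (fun a => Vmon' f dd a /\ inS h a) p) /\
     (forall a, Exp h I a <-> (inS h a /\ exists t, is_pval f dd a t /\ (0 <= t)))).
Proof.
move=> d_gt0 facets Hdd_dvd dd_int q_gt0 e_prim dd_qe cond1 cond2 cond3.
pose i0 := Ordinal (facets_nonempty d_gt0 facets).
split; first split.
- exact: (fixed_ideal_conditions i0 dd_int q_gt0 e_prim dd_qe).
- exact: (conditions_fixed_ideal i0 Hdd_dvd dd_int q_gt0 e_prim dd_qe).
- move=> _ I I_mon I_nz I_fixed.
  exact: (fixed_ideal_description i0 dd_int q_gt0 e_prim dd_qe I_mon I_nz I_fixed).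
Qed.
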